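(* Let $Q_2 = \{m^2 : m \in \mathbb{N}\}$, $Q_3 = \{m^3 : m \in \mathbb{N}\}$, and for integers $a \geq 2$ and $i \in \{0,\ldots,a-1\}$ let $\mathbb{M}_{a,i} = \{n \in \mathbb{N} : n \bmod a = i\}$. Then: (a) $\mathrm{cnum}(F) < \mathrm{cnum}(\mathbb{S})$ for every finite $F \subseteq \mathbb{N}$; (b) $\mathrm{cnum}(Q_3) < \mathrm{cnum}(\mathbb{S}) < \mathrm{cnum}(\mathbb{N})$; (c) $\mathrm{cnum}(\mathbb{S})$ and $\mathrm{cnum}(Q_2)$ are incomparable: neither $\mathrm{cnum}(\mathbb{S}) \leq \mathrm{cnum}(Q_2)$ nor $\mathrm{cnum}(Q_2) \leq \mathrm{cnum}(\mathbb{S})$; (d) for every $a \geq 2$ and $i \in \{0,\ldots,a-1\}$, $\mathrm{cnum}(\mathbb{S})$ and $\mathrm{cnum}(\mathbb{M}_{a,i})$ are incomparable in the same sense. In particular the order $\leq$ on $\mathcal{S}/\mathcal{F}$ is not total on the c-numerosities of subsets of $\mathbb{N}$.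
   Context: $\mathbb{N} = \{1,2,3,\ldots\}$; for $S \subseteq \mathbb{N}$, $f_n(S) = |S \cap \{1,\ldots,n\}|$. The set $\mathbb{S}$ is defined by: $n \in \mathbb{S}$ iff $n \geq 2$ and $\lceil \log_2(\log_2 n)\rceil$ is odd (equivalently, the union of the intervals $\{m : 2^{(2^{k-1})} < m \leq 2^{(2^k)}\}$ over odd $k\geq 1$). $\mathcal{S}/\mathcal{F}$ is the set of sequences of non-negative integers modulo $(x_n)\sim(y_n)$ iff $x_n=y_n$ for all but finitely many $n$, with $[x] \leq [y]$ iff $x_n \leq y_n$ for all but finitely many $n$, and $[x] < [y]$ iff $x_n < y_n$ for all but finitely many $n$. $\mathrm{cnum}(S) = [(f_n(S))_n]$. *)

From mathcomp Require Import all_boot.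
Set Implicit Arguments. Unset Strict Implicit. Unset Printing Implicit Defensive.

(* Subsets of N = {1,2,...} are represented as boolean predicates on nat;
   the value at 0 is irrelevant since f_n only counts 1..n. *)
Definition nset := nat -> bool.

Definition fcount (S : nset) (n : nat) : nat := count S (iota 1 n).

Definition cnum (S : nset) : nat -> nat := fun n => fcount S n.

(* The order on S/F : [x] <= [y] iff x_n <= y_n for all but finitely many n;
   [x] < [y] iff x_n < y_n for all but finitely many n.
   (Both are independent of the representatives.) *)
Definition sf_le (x y : nat -> nat) : Prop := exists N, forall n, N <= n -> x n <= y n.
Definition sf_lt (x y : nat -> nat) : Prop := exists N, forall n, N <= n -> x n < y n.

(* The set S: union over odd k >= 1 of {m : 2^(2^(k-1)) < m <= 2^(2^k)};
   the witness k can be bounded by m since 2^(2^(k-1)) < m forces k <= m. *)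
Definition bbS : nset := fun m =>
  [exists k : 'I_m.+1, odd k && (2 ^ (2 ^ k.-1) < m <= 2 ^ (2 ^ k))].

Definition natset : nset := fun m => 0 < m.

Definition Q2 : nset := fun n => [exists m : 'I_n.+1, (0 < m) && (m ^ 2 == n)].
Definition Q3 : nset := fun n => [exists m : 'I_n.+1, (0 < m) && (m ^ 3 == n)].

Definition Mset (a i : nat) : nset := fun n => (0 < n) && (n %% a == i).

Definition finite_nset (F : nset) : Prop := exists N, forall n, F n -> n < N.

Definition incomparable (x y : nat -> nat) : Prop := ~ sf_le x y /\ ~ sf_le y x.

(* The blocks (2^2^(k-1), 2^2^k] partition the integers above 2, each right
   end being the square of the previous one, and S is the union of the
   odd-numbered blocks.  At the end of an odd block S holds all but sqrt n of
   the integers up to n, while at the end of an even block it holds fewer than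
   sqrt n of them.  This oscillation beats every set of intermediate density,
   such as the squares or a residue class, infinitely often in both directions;
   on the other hand S always holds at least about sqrt n / 2 of the integers
   up to n, which dominates finite sets and the cubes. *)

From mathcomp Require Import all_boot zify.
Set Implicit Arguments. Unset Strict Implicit. Unset Printing Implicit Defensive.

Lemma fcountD S m d : fcount S (m + d) = fcount S m + count S (iota m.+1 d).
Proof. by rewrite /fcount iotaD count_cat add1n. Qed.

Lemma fcountS S n : fcount S n.+1 = fcount S n + S n.+1.
Proof. by rewrite -[in LHS]addn1 fcountD /= addn0. Qed.

Lemma leq_fcount S m n : m <= n -> fcount S m <= fcount S n.
Proof. by move=> le_mn; rewrite -(subnKC le_mn) fcountD leq_addr. Qed.

Lemma fcount_le S n : fcount S n <= n.
Proof. by have := count_size S (iota 1 n); rewrite size_iota. Qed.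

Lemma fcount_all (S : nset) m n : m <= n ->
  (forall x, m < x <= n -> S x) -> fcount S n = fcount S m + (n - m).
Proof.
move=> le_mn allS; rewrite -{1}(subnKC le_mn) fcountD; congr (_ + _).
have : all S (iota m.+1 (n - m)).
  by apply/allP => x; rewrite mem_iota => hx; apply: allS; lia.
by rewrite all_count size_iota => /eqP.
Qed.

Lemma fcount_none (S : nset) m n : m <= n ->
  (forall x, m < x <= n -> ~~ S x) -> fcount S n = fcount S m.
Proof.
move=> le_mn noS; rewrite -{1}(subnKC le_mn) fcountD -[RHS]addn0; congr (_ + _).
apply/eqP; rewrite -leqn0 leqNgt -has_count; apply/hasPn => x.
by rewrite mem_iota => hx; apply: noS; lia.
Qed.

Lemma fcount_finite F : finite_nset F -> exists M, forall n, fcount F n <= M.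
Proof.
move=> [M ltFM]; exists M => n; have [le_nM|le_Mn] := leqP n M.
  exact: leq_trans (fcount_le F n) le_nM.
rewrite (@fcount_none F M) ?fcount_le 1?ltnW // => x /andP[lt_Mx _].
by apply/negP => /ltFM; lia.
Qed.

Lemma fcount_nat n : fcount natset n = n.
Proof. by rewrite (@fcount_all _ 0) ?subn0 // => x; rewrite /natset; lia. Qed.

Lemma not_sf_le_often (x y : nat -> nat) :
  (forall N, exists2 n, N <= n & y n < x n) -> ~ sf_le x y.
Proof. by move=> often [N le_xy]; have [n /le_xy] := often N; rewrite leqNgt => /negP. Qed.

Definition tower (k : nat) := 2 ^ 2 ^ k.

Lemma towerS k : tower k.+1 = tower k * tower k.
Proof. by rewrite /tower expnS mulnC expnM expnS expn1. Qed.

Lemma ltn_tower j k : (tower j < tower k) = (j < k).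
Proof. by rewrite /tower !ltn_exp2l. Qed.

Lemma ltn_tower_id k : k < tower k.
Proof. exact: ltn_trans (ltn_expl k (isT : 1 < 2)) (ltn_expl _ (isT : 1 < 2)). Qed.

Lemma tower_ge2 k : 2 <= tower k.
Proof. by rewrite /tower -{1}(expn1 2) leq_exp2l // expn_gt0. Qed.

Lemma tower_block_exists m : 3 <= m -> exists2 k, 0 < k & tower k.-1 < m <= tower k.
Proof.
elim: m => // m IH lt2m; have [le_m2|lt2m'] := leqP m 2.
  by exists 1 => //=; rewrite /tower /=; lia.
have [k k_gt0 /andP[lo hi]] := IH lt2m'.
have [lt_m_tower|le_tower_m] := ltnP m (tower k); first by exists k => //; lia.
exists k.+1 => //=; rewrite towerS; have := tower_ge2 k; nia.
Qed.

Lemma tower_block_unique j k m : 0 < j -> 0 < k ->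
  tower j.-1 < m <= tower j -> tower k.-1 < m <= tower k -> j = k.
Proof.
move=> j_gt0 k_gt0 /andP[loj hij] /andP[lok hik].
have : j.-1 < k by rewrite -ltn_tower; lia.
have : k.-1 < j by rewrite -ltn_tower; lia.
lia.
Qed.

Lemma bbS_odd_block k m : odd k -> tower k.-1 < m <= tower k -> bbS m.
Proof.
move=> odd_k blk; have lt_km : k < m.+1.
  by case: k odd_k blk => // k _ /andP[/= lo _]; have := ltn_tower_id k; lia.
by apply/existsP; exists (Ordinal lt_km); rewrite /= odd_k.
Qed.

Lemma bbS_even_block k m : ~~ odd k -> 0 < k -> tower k.-1 < m <= tower k -> ~~ bbS m.
Proof.
move=> even_k k_gt0 blk; apply/negP => /existsP[j /andP[odd_j blj]].
have j_gt0 : 0 < j by case: (nat_of_ord j) odd_j.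
by move: odd_j; rewrite (tower_block_unique j_gt0 k_gt0 blj blk) (negbTE even_k).
Qed.

Lemma bbS1 : ~~ bbS 1.
Proof. by apply/existsP => -[j /andP[_ /andP[lo _]]]; have := tower_ge2 j.-1; lia. Qed.

Lemma tower_pred_le k : tower k.-1 <= tower k.
Proof. by case: k => // k; rewrite leq_eqVlt ltn_tower ltnSn orbT. Qed.

Lemma fcount_bbS_odd_block k : odd k -> tower k - tower k.-1 <= fcount bbS (tower k).
Proof.
move=> odd_k; rewrite (@fcount_all _ (tower k.-1)) ?leq_addl ?tower_pred_le //.
by move=> x; apply: bbS_odd_block.
Qed.

Lemma fcount_bbS_even_block k : ~~ odd k -> 0 < k ->
  fcount bbS (tower k) = fcount bbS (tower k.-1).
Proof.
move=> even_k k_gt0; apply: fcount_none (tower_pred_le k) _ => x.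
exact: bbS_even_block.
Qed.

Lemma fcount_bbS_lt n : 0 < n -> fcount bbS n < n.
Proof.
case: n => // n _; rewrite /fcount /= (negbTE bbS1).
by have := count_size bbS (iota 2 n); rewrite size_iota.
Qed.

(* Outside bbS we sit in an even block, after a whole odd block of length at
   least half of its right end. *)
Lemma fcount_bbS_sq_bound_off n : 3 <= n -> ~~ bbS n -> n <= 4 * fcount bbS n ^ 2.
Proof.
move=> le3n nS; have [k k_gt0 blk] := tower_block_exists le3n.
have even_k : ~~ odd k by apply: contra nS => odd_k; apply: bbS_odd_block blk.
case: k k_gt0 even_k blk => [|[|k]] // _ even_k /andP[lo hi].
have odd_k1 : odd k.+1 by move: even_k; rewrite /= negbK.
have oddblk := fcount_bbS_odd_block odd_k1; rewrite /= in oddblk.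
have le_s := leq_fcount bbS (ltnW lo); rewrite /= in le_s.
move: hi oddblk le_s; rewrite !towerS; have := tower_ge2 k.
set T := tower k; set s := fcount bbS n => T2 hi oddblk le_s.
have le_TT : T * T <= 2 * s by nia.
have : T * T * (T * T) <= 2 * s * (2 * s) by apply: leq_mul.
nia.
Qed.

Lemma fcount_bbS_sq_bound n : 3 <= n -> n <= 4 * fcount bbS n ^ 2.
Proof.
elim: n => // n IH le3n.
case inS: (bbS n.+1); last by apply: fcount_bbS_sq_bound_off; rewrite ?inS.
rewrite fcountS inS; have [le_n2|lt2n] := leqP n 2; first nia.
by have := IH lt2n; nia.
Qed.

Lemma fcount_bbS_gt M n : 4 * M ^ 2 + 3 <= n -> M < fcount bbS n.
Proof.
move=> le_n; have := fcount_bbS_sq_bound (leq_trans (leq_addl _ _) le_n).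
rewrite ltnNge; apply: contraL => le_sM.
have : fcount bbS n ^ 2 <= M ^ 2 by rewrite leq_exp2r.
lia.
Qed.

Lemma bbS_dense_often N : exists2 E, N <= E /\ 4 < E & E * E - E <= fcount bbS (E * E).
Proof.
exists (tower N.*2.+2).
  split; first by have := ltn_tower_id N.*2.+2; lia.
  by rewrite -[4]/(tower 1) ltn_tower.
rewrite -towerS -[N.*2.+2]/(N.*2.+3).-1; apply: fcount_bbS_odd_block.
by rewrite -addn3 oddD odd_double.
Qed.

Lemma bbS_sparse_often N : exists2 E, N <= E & fcount bbS (E * E) < E.
Proof.
exists (tower N.*2.+1); first by have := ltn_tower_id N.*2.+1; lia.
rewrite -towerS (@fcount_bbS_even_block N.*2.+2) ?fcount_bbS_lt //.
- exact: leq_trans (tower_ge2 _).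
- by rewrite -addn2 oddD odd_double.
Qed.

Definition Qp (p : nat) : nset := fun n => [exists m : 'I_n.+1, (0 < m) && (m ^ p == n)].

Lemma fcount_Qp_root p n : 0 < p -> fcount (Qp p) n ^ p <= n < (fcount (Qp p) n).+1 ^ p.
Proof.
move=> p_gt0; elim: n => [|n IH]; first by rewrite /fcount exp0n // exp1n.
move: IH; rewrite fcountS; set c := fcount (Qp p) n => /andP[lo hi].
have [eq_n|ne_n] := eqVneq n.+1 (c.+1 ^ p).
  have lt_cn : c.+1 < n.+2 by rewrite eq_n ltnS -{1}(expn1 c.+1) leq_pexp2l.
  have -> : Qp p n.+1 by apply/existsP; exists (Ordinal lt_cn); rewrite /= eq_n eqxx.
  by rewrite addn1 -eq_n leqnn /= eq_n ltn_exp2r.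
have -> : Qp p n.+1 = false.
  apply/negbTE/existsP => -[m /andP[_ /eqP m_n]].
  have : c ^ p < m ^ p < c.+1 ^ p by lia.
  by rewrite !ltn_exp2r //; lia.
by rewrite addn0; lia.
Qed.

Lemma fcount_Qp_exp p m : 0 < p -> fcount (Qp p) (m ^ p) = m.
Proof.
move=> p_gt0; have /andP[lo hi] := fcount_Qp_root (m ^ p) p_gt0.
by apply/eqP; rewrite eqn_leq -(leq_exp2r _ _ p_gt0) lo -ltnS -(ltn_exp2r _ _ p_gt0).
Qed.

Lemma count_mod_iota a i s : i < a -> count (fun x => x %% a == i) (iota s a) = 1.
Proof.
move=> lt_ia; elim: s => [|s IH].
  rewrite (@eq_in_count _ _ (pred1 i)); last first.
    by move=> x; rewrite mem_iota add0n => lt_xa /=; rewrite modn_small.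
  by rewrite count_uniq_mem ?iota_uniq // mem_iota add0n lt_ia.
rewrite -IH; case: a lt_ia {IH} => // a _.
rewrite -[X in iota s.+1 X]addn1 iotaD count_cat /= addn0.
by rewrite addSnnS modnDr addnC.
Qed.

Lemma fcount_Mset_mul a i q : i < a -> fcount (Mset a i) (q * a) = q.
Proof.
move=> lt_ia; elim: q => [|q IH]; first by rewrite mul0n.
rewrite mulSn addnC fcountD IH -[q.+1]addn1; congr (_ + _).
rewrite -(count_mod_iota (q * a).+1 lt_ia); apply: eq_in_count => x.
by rewrite mem_iota /Mset => /andP[lt_x _]; rewrite (leq_ltn_trans _ lt_x).
Qed.

Lemma fcount_Mset_bounds a i n : i < a ->
  n %/ a <= fcount (Mset a i) n <= (n %/ a).+1.
Proof.
move=> lt_ia; have a_gt0 : 0 < a by apply: leq_ltn_trans lt_ia.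
apply/andP; split.
  by rewrite -{1}(fcount_Mset_mul (n %/ a) lt_ia) leq_fcount ?leq_divM.
by rewrite -{1}(fcount_Mset_mul (n %/ a).+1 lt_ia) leq_fcount // ltnW ?ltn_ceil.
Qed.

Lemma cnum_finite_lt_bbS F : finite_nset F -> sf_lt (cnum F) (cnum bbS).
Proof.
move=> /fcount_finite[M le_FM]; exists (4 * M ^ 2 + 3) => n le_n.
exact: leq_ltn_trans (le_FM n) (fcount_bbS_gt le_n).
Qed.

Lemma cnum_Q3_lt_bbS : sf_lt (cnum Q3) (cnum bbS).
Proof.
exists 125 => n le_n; rewrite /cnum.
have /andP[lo hi] := fcount_Qp_root n (isT : 0 < 3).
have := fcount_bbS_sq_bound (leq_trans (isT : 3 <= 125) le_n).
rewrite -/(Qp 3); set q := fcount (Qp 3) n; set s := fcount bbS n => le_ns.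
rewrite ltnNge; apply/negP => le_sq.
have le_sq2 : s ^ 2 <= q ^ 2 by rewrite leq_exp2r.
have lt_q5 : q < 5 by rewrite ltnNge; apply/negP => le5q; nia.
have : q.+1 ^ 3 <= 5 ^ 3 by rewrite leq_exp2r.
lia.
Qed.

Lemma cnum_bbS_lt_nat : sf_lt (cnum bbS) (cnum natset).
Proof. by exists 1 => n n_gt0; rewrite /cnum fcount_nat fcount_bbS_lt. Qed.

Lemma incomparable_bbS_Q2 : incomparable (cnum bbS) (cnum Q2).
Proof.
split; apply: not_sf_le_often => N; rewrite /cnum -/(Qp 2).
- have [E [le_NE lt4E] dense] := bbS_dense_often N.
  exists (E ^ 2); first by nia.
  by rewrite fcount_Qp_exp //; move: dense; rewrite mulnn; nia.
- have [E le_NE sparse] := bbS_sparse_often N.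
  exists (E ^ 2); first by move: sparse; nia.
  by rewrite fcount_Qp_exp // -mulnn.
Qed.

Lemma incomparable_bbS_Mset a i : 2 <= a -> i < a -> incomparable (cnum bbS) (cnum (Mset a i)).
Proof.
move=> le2a lt_ia; split; apply: not_sf_le_often => N; rewrite /cnum.
- have [E [le_NE lt4E] dense] := bbS_dense_often N.
  exists (E * E); first by nia.
  have /andP[_ hi] := fcount_Mset_bounds (E * E) lt_ia.
  have : E * E %/ a <= E * E %/ 2 by apply: leq_div2l.
  have := leq_divM (E * E) 2.
  move: hi dense; set t := E * E %/ a; set u := E * E %/ 2; nia.
- have [E le_NaE sparse] := bbS_sparse_often (N + a).
  exists (E * E); first by nia.
  have /andP[lo _] := fcount_Mset_bounds (E * E) lt_ia.
  have : E <= E * E %/ a by rewrite leq_divRL; nia.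
  lia.
Qed.

Theorem mainTheorem9 :
  (forall F : nset, finite_nset F -> sf_lt (cnum F) (cnum bbS)) /\
  (sf_lt (cnum Q3) (cnum bbS) /\ sf_lt (cnum bbS) (cnum natset)) /\
  incomparable (cnum bbS) (cnum Q2) /\
  (forall a i : nat, 2 <= a -> i < a -> incomparable (cnum bbS) (cnum (Mset a i))) /\
  (exists A B : nset, incomparable (cnum A) (cnum B)).
Proof.
split; first exact: cnum_finite_lt_bbS.
split; first by split; [exact: cnum_Q3_lt_bbS | exact: cnum_bbS_lt_nat].
split; first exact: incomparable_bbS_Q2.
split; first exact: incomparable_bbS_Mset.
by exists bbS, Q2; exact: incomparable_bbS_Q2.
Qed.
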